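(* Let $(x'_n,y'_n)_{n\in\mathbb Z}$ be an elliptic sequence in general position on a biquadratic polynomial $F$, let $j_1<j_2$ be integers, $w_{j_1},\dots,w_{j_2}\in\mathbb C$, and $f(x)=\sum_{j=j_1}^{j_2}\dfrac{w_j}{x'_j-x}$. Let $A,C$ be polynomials and suppose that the rational function $y\mapsto A(y)(\mathcal Df)(y)-C(y)(\mathcal Mf)(y)$ is a polynomial. Then for $j=j_1,\dots,j_2-1$: $$\frac{w_{j+1}}{(y'_{j+1}-y'_j)X_2(x'_{j+1})}\left(\frac{A(y'_j)}{x'_{j+1}-x'_j}-\frac{C(y'_j)}2\right)=\frac{w_j}{(y'_j-y'_{j-1})X_2(x'_j)}\left(\frac{A(y'_j)}{x'_{j+1}-x'_j}+\frac{C(y'_j)}2\right).$$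
   Context: $F(x,y)=\sum_{i,j=0}^2c_{i,j}x^iy^j=Y_0(y)+xY_1(y)+x^2Y_2(y)=X_0(x)+yX_1(x)+y^2X_2(x)$. An elliptic sequence on $F$ is $(x_n,y_n)_{n\in\mathbb Z}$ such that for every $n$, $x_n,x_{n+1}$ are the two roots of $F(\cdot,y_n)$ and $y_{n-1},y_n$ the two roots of $F(x_n,\cdot)$; general position: the $x'_n$ distinct, the $y'_n$ distinct, $X_2,Y_2$ nonvanishing there. For a rational $f$ and a value $y$ with $x^\pm$ the two roots of $F(x,y)=0$: $(\mathcal Df)(y)=\frac{f(x^+)-f(x^-)}{x^+-x^-}$, $(\mathcal Mf)(y)=\frac{f(x^+)+f(x^-)}2$ (rational functions of $y$). *)

From HB Require Import structures.
From mathcomp Require Import all_boot all_order all_algebra.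
From mathcomp Require Import complex.
From mathcomp Require Import reals.
Set Implicit Arguments. Unset Strict Implicit. Unset Printing Implicit Defensive.
Import Order.TTheory GRing.Theory Num.Theory.
Local Open Scope ring_scope.

Section Biquadratic.
Variable K : fieldType.
Variable c : 'I_3 -> 'I_3 -> K.

Definition Feval (x y : K) : K :=
  \sum_(i < 3) \sum_(j < 3) c i j * x ^+ i * y ^+ j.

(* F = X_0(x) + y X_1(x) + y^2 X_2(x),  F = Y_0(y) + x Y_1(y) + x^2 Y_2(y) *)
Definition X2 (x : K) : K := \sum_(i < 3) c i ord_max * x ^+ i.
Definition Y2 (y : K) : K := \sum_(j < 3) c ord_max j * y ^+ j.

Definition elliptic_seq (xs ys : int -> K) : Prop :=
  forall n : int,
    (forall x, Feval x (ys n) = Y2 (ys n) * (x - xs n) * (x - xs (n + 1))) /\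
    (forall y, Feval (xs n) y = X2 (xs n) * (y - ys (n - 1)) * (y - ys n)).

Definition general_position (xs ys : int -> K) : Prop :=
  injective xs /\ injective ys /\
  (forall n, X2 (xs n) != 0) /\ (forall n, Y2 (ys n) != 0).
End Biquadratic.

(* sum over the integer range j1 <= j <= j2 (assuming j1 <= j2) *)
Definition isum (K : fieldType) (j1 j2 : int) (g : int -> K) : K :=
  \sum_(k < (`|j2 - j1|%N).+1) g (j1 + (k : nat)%:Z).

(* (D f)(y) and (M f)(y) evaluated at the two roots xp, xm of F(., y) *)
Definition Dop (K : fieldType) (f : K -> K) (xp xm : K) : K :=
  (f xp - f xm) / (xp - xm).
Definition Mop (K : fieldType) (f : K -> K) (xp xm : K) : K :=
  (f xp + f xm) / 2.

From HB Require Import structures.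
From mathcomp Require Import all_boot all_order all_algebra.
From mathcomp Require Import complex.
From mathcomp Require Import reals.
From mathcomp Require Import ring zify.
Set Implicit Arguments. Unset Strict Implicit. Unset Printing Implicit Defensive.
Import Order.TTheory GRing.Theory Num.Theory.
Local Open Scope ring_scope.

(* Off finitely many values of y, F(., y) has two distinct roots, and the
   w_k-term of A Df - C Mf is the partial fraction
     w_k (2 A Y2 - C (2 x_k Y2 + Y1)) / (2 F(x_k, y)),
   where F(x_k, y) = X2(x_k) (y - y_{k-1}) (y - y_k) along the elliptic sequence.
   As the sum is a polynomial, its residue at y = y_j vanishes.  Only the terms
   k = j and k = j + 1 have a pole there, and Vieta's relation
   Y1(y_j) = - Y2(y_j) (x_j + x_{j+1}) turns the vanishing of their residues into
   the stated identity. *)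

Lemma poly_eq0_horner (K : numDomainType) (p : {poly K}) :
  (forall x, p.[x] = 0) -> p = 0.
Proof.
move=> p0; apply/eqP/negPn/negP => nz_p.
have rootsP : all (root p) (mkseq (fun i => i%:R) (size p)).
  by apply/allP => x _; rewrite /root p0.
have uniq_nat : uniq (mkseq (fun i => i%:R : K) (size p)).
  by rewrite map_inj_uniq ?iota_uniq // => a b /eqP; rewrite eqr_nat => /eqP.
by have := max_poly_roots nz_p rootsP uniq_nat; rewrite size_mkseq ltnn.
Qed.

Lemma horner_sum_frac (K : fieldType) (I : Type) (r : seq I) (P : pred I)
    (U V : I -> {poly K}) :
  exists W : {poly K}, forall y, (\prod_(i <- r | P i) V i).[y] != 0 ->
    \sum_(i <- r | P i) (U i).[y] / (V i).[y] = W.[y] / (\prod_(i <- r | P i) V i).[y].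
Proof.
elim: r => [|i r [W IHW]].
  by exists 0 => y _; rewrite !big_nil horner0 mul0r.
rewrite /=; case Pi: (P i); last by exists W => y; rewrite !big_cons Pi; apply: IHW.
exists (U i * \prod_(k <- r | P k) V k + W * V i) => y.
rewrite !big_cons Pi !hornerE mulf_eq0 negb_or => /andP[Vi0 Vr0].
by rewrite IHW //; field; rewrite Vi0 Vr0.
Qed.

Lemma residue_eq0 (K : numFieldType) (a : K) (P N D U V Q : {poly K}) :
  Q != 0 -> D.[a] != 0 -> V.[a] != 0 ->
  (forall y, Q.[y] != 0 -> y != a -> D.[y] != 0 -> V.[y] != 0 ->
     P.[y] = N.[y] / ((y - a) * D.[y]) + U.[y] / V.[y]) ->
  N.[a] = 0.
Proof.
move=> Q0 Da Va PE.
pose Z := ('X - a%:P) * D * V * P - (N * V + ('X - a%:P) * D * U).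
pose B := Q * ('X - a%:P) * D * V.
have B0 : B != 0.
  have nz_at (p : {poly K}) : p.[a] != 0 -> p != 0.
    by apply: contraNneq => ->; rewrite horner0.
  by rewrite !mulf_neq0 ?polyXsubC_eq0 // nz_at.
have : Z * B = 0.
  apply: poly_eq0_horner => y; rewrite hornerM.
  have [->|] := eqVneq B.[y] 0; first by rewrite mulr0.
  rewrite /B !hornerM !mulf_eq0 !negb_or hornerXsubC subr_eq0.
  move=> /andP[/andP[/andP[Qy ya] Dy] Vy].
  rewrite /Z !(hornerM, hornerD, hornerN, hornerX, hornerC) PE //.
  by field; rewrite subr_eq0 ya Dy Vy.
move/eqP; rewrite mulf_eq0 (negPf B0) orbF => /eqP/(congr1 (horner^~ a)).
rewrite /Z !(hornerM, hornerD, hornerN, hornerX, hornerC) subrr !mul0r add0r addr0.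
by move/eqP; rewrite oppr_eq0 mulf_eq0 (negPf Va) orbF => /eqP.
Qed.

Lemma quadratic_factor (K : numClosedFieldType) (a b c : K) :
  a != 0 -> b ^+ 2 - 4 * a * c != 0 ->
  exists p m : K, [/\ p != m, p + m = - b / a &
    forall x, a * x ^+ 2 + b * x + c = a * (x - p) * (x - m)].
Proof.
move=> a0 disc0; set s := sqrtC (b ^+ 2 - 4 * a * c).
have s2 : s ^+ 2 = b ^+ 2 - 4 * a * c by rewrite sqrtCK.
have s0 : s != 0 by apply: contraNneq disc0 => s0; rewrite -s2 s0 expr0n.
exists ((- b + s) / (2 * a)), ((- b - s) / (2 * a)); split.
- rewrite -subr_eq0; have -> : (- b + s) / (2 * a) - (- b - s) / (2 * a) = s / a.
    by field; rewrite a0.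
  by rewrite mulf_neq0 ?invr_eq0.
- by field; rewrite a0.
- move=> x; have -> : a * (x - (- b + s) / (2 * a)) * (x - (- b - s) / (2 * a))
      = a * x ^+ 2 + b * x + (b ^+ 2 - s ^+ 2) / (4 * a) by field; rewrite a0.
  by rewrite s2; field; rewrite a0.
Qed.

Lemma Dop_Mop_cauchy_sum (K : numFieldType) (I : eqType) (r : seq I) (w a : I -> K)
    (f : K -> K) (A C p m : K) :
  (forall x, f x = \sum_(i <- r) w i / (a i - x)) ->
  p != m -> (forall i, i \in r -> a i != p /\ a i != m) ->
  A * Dop f p m - C * Mop f p m
  = \sum_(i <- r) w i * (2 * A - C * (2 * a i - p - m)) / (2 * ((a i - p) * (a i - m))).
Proof.
move=> fE pm a_pm; rewrite /Dop /Mop !fE -sumrB -big_split /=.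
rewrite !mulr_suml mulr_sumr [C * _]mulr_sumr -sumrB; apply: eq_big_seq => i ri.
have [ap am] := a_pm i ri.
by field; rewrite !subr_eq0 ap am pm.
Qed.

Definition int_range (j1 j2 : int) : seq int :=
  [seq j1 + (k : nat)%:Z | k <- iota 0 (`|j2 - j1|%N).+1].

Lemma isum_int_range (K : fieldType) (j1 j2 : int) (g : int -> K) :
  isum j1 j2 g = \sum_(k <- int_range j1 j2) g k.
Proof.
by rewrite /isum big_map -(big_mkord xpredT (fun k => g (j1 + k%:Z))) /index_iota subn0.
Qed.

Lemma int_range_uniq (j1 j2 : int) : uniq (int_range j1 j2).
Proof. by rewrite map_inj_uniq ?iota_uniq // => a b /addrI []. Qed.

Lemma mem_int_range (j1 j2 k : int) :
  j1 <= j2 -> (k \in int_range j1 j2) = (j1 <= k <= j2).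
Proof.
move=> j12; apply/mapP/idP => [[n] |].
  by rewrite mem_iota add0n => n_lt ->; apply/andP; split; lia.
move=> /andP[j1k kj2]; exists `|k - j1|%N; last by lia.
by rewrite mem_iota add0n; lia.
Qed.

Definition Ypoly (K : fieldType) (c : 'I_3 -> 'I_3 -> K) (i : 'I_3) : {poly K} :=
  \sum_(j < 3) c i j *: 'X^j.

Lemma horner_Ypoly (K : fieldType) (c : 'I_3 -> 'I_3 -> K) i y :
  (Ypoly c i).[y] = \sum_(j < 3) c i j * y ^+ j.
Proof.
by rewrite /Ypoly horner_sum; apply: eq_bigr => j _; rewrite hornerZ hornerXn.
Qed.

Lemma Y2_Ypoly (K : fieldType) (c : 'I_3 -> 'I_3 -> K) y :
  Y2 c y = (Ypoly c ord_max).[y].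
Proof. by rewrite horner_Ypoly. Qed.

Lemma Feval_Ypoly (K : fieldType) (c : 'I_3 -> 'I_3 -> K) x y :
  Feval c x y = (Ypoly c ord_max).[y] * x ^+ 2 + (Ypoly c (inord 1)).[y] * x
                + (Ypoly c ord0).[y].
Proof.
rewrite /Feval (eq_bigr (fun i : 'I_3 => (Ypoly c i).[y] * x ^+ i)); last first.
  move=> i _; rewrite horner_Ypoly mulr_suml; apply: eq_bigr => j _; ring.
rewrite !big_ord_recl big_ord0 addr0 expr0 mulr1 expr1.
have -> : lift ord0 (lift ord0 (ord0 : 'I_1)) = ord_max :> 'I_3 by apply: val_inj.
have -> : lift ord0 (ord0 : 'I_2) = inord 1 :> 'I_3.
  by apply: val_inj; rewrite /= inordK.
ring.
Qed.

Section EllipticResidues.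

Variable K : numClosedFieldType.
Variable c : 'I_3 -> 'I_3 -> K.
Variables xs ys : int -> K.
Hypothesis ell : elliptic_seq c xs ys.
Hypothesis xs_inj : injective xs.
Hypothesis ys_inj : injective ys.
Hypothesis X2_neq0 : forall n, X2 c (xs n) != 0.
Hypothesis Y2_neq0 : forall n, Y2 c (ys n) != 0.

Local Notation Y2p := (Ypoly c ord_max).
Local Notation Y1p := (Ypoly c (inord 1)).
Local Notation Y0p := (Ypoly c ord0).
Local Notation disc := (Y1p ^+ 2 - 4%:P * Y2p * Y0p).

Lemma Y0_ys n : Y0p.[ys n] = Y2 c (ys n) * (xs n * xs (n + 1)).
Proof.
have := (ell n).1 0; rewrite Feval_Ypoly -Y2_Ypoly.
by move=> /(canRL (addKr _)) ->; ring.
Qed.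

Lemma Y1_ys n : Y1p.[ys n] = - (Y2 c (ys n) * (xs n + xs (n + 1))).
Proof.
have := (ell n).1 1; rewrite Feval_Ypoly -Y2_Ypoly Y0_ys.
by move=> /(canRL (addrK _)) /(canRL (addKr _)); rewrite mulr1 => ->; ring.
Qed.

Lemma disc_ys n : disc.[ys n] = (Y2 c (ys n) * (xs (n + 1) - xs n)) ^+ 2.
Proof. by rewrite !hornerE -Y2_Ypoly Y0_ys Y1_ys; ring. Qed.

Definition pf_num (w : int -> K) (A C : {poly K}) (k : int) : {poly K} :=
  (w k)%:P * (2%:P * A * Y2p - C * ((2 * xs k)%:P * Y2p + Y1p)).

Definition pf_den (k : int) : {poly K} :=
  (2 * X2 c (xs k))%:P * ('X - (ys (k - 1))%:P) * ('X - (ys k)%:P).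

Lemma horner_pf_den k y :
  (pf_den k).[y] = 2 * X2 c (xs k) * (y - ys (k - 1)) * (y - ys k).
Proof. by rewrite /pf_den !(hornerM, hornerC, hornerXsubC). Qed.

Lemma pf_den_Feval k y : (pf_den k).[y] = 2 * Feval c (xs k) y.
Proof. by rewrite horner_pf_den (ell k).2 !mulrA. Qed.

Variables (j1 j2 : int) (w : int -> K) (A C P : {poly K}).
Hypothesis j12 : j1 <= j2.
Hypothesis DM_P : forall y xp xm : K,
  Y2 c y != 0 -> Feval c xp y = 0 -> Feval c xm y = 0 -> xp != xm ->
  (forall j : int, j1 <= j <= j2 -> xp != xs j /\ xm != xs j) ->
  A.[y] * Dop (fun x => isum j1 j2 (fun j => w j / (xs j - x))) xp xm
  - C.[y] * Mop (fun x => isum j1 j2 (fun j => w j / (xs j - x))) xp xm = P.[y].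

Definition excluded_poly : {poly K} :=
  Y2p * disc * \prod_(k <- int_range (j1 - 1) j2) ('X - (ys k)%:P).

Lemma excluded_poly_neq0 : excluded_poly != 0.
Proof.
have nz_at (p : {poly K}) y : p.[y] != 0 -> p != 0.
  by apply: contraNneq => ->; rewrite horner0.
rewrite !mulf_neq0 //.
- by apply: (nz_at _ (ys 0)); rewrite -Y2_Ypoly Y2_neq0.
- apply: (nz_at _ (ys 0)); rewrite disc_ys expf_neq0 // mulf_neq0 ?Y2_neq0 //.
  by rewrite subr_eq0 (inj_eq xs_inj).
- by rewrite prodf_seq_neq0; apply/allP => k _; rewrite polyXsubC_eq0.
Qed.

Lemma P_partial_fractions y : excluded_poly.[y] != 0 ->
  P.[y] = \sum_(k <- int_range j1 j2) (pf_num w A C k).[y] / (pf_den k).[y].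
Proof.
rewrite !hornerM !mulf_eq0 !negb_or -Y2_Ypoly => /andP[/andP[Y2y disc_y] ys_y].
have y_ne k : j1 <= k <= j2 -> y != ys k /\ y != ys (k - 1).
  move=> /andP[j1k kj2]; move: ys_y; rewrite horner_prod prodf_seq_neq0 => /allP ys_y.
  have ne l : l \in int_range (j1 - 1) j2 -> y != ys l.
    by move=> /ys_y; rewrite hornerXsubC subr_eq0.
  by split; apply: ne; rewrite mem_int_range //; lia.
have disc_y' : Y1p.[y] ^+ 2 - 4 * Y2 c y * Y0p.[y] != 0.
  by move: disc_y; rewrite !hornerE -Y2_Ypoly.
have [p [m [pm pmE Ffac]]] := quadratic_factor Y2y disc_y'.
have Fxy x : Feval c x y = Y2 c y * (x - p) * (x - m).
  by rewrite Feval_Ypoly -Y2_Ypoly Ffac.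
have xs_pm k : j1 <= k <= j2 -> xs k != p /\ xs k != m.
  move=> /y_ne[yk yk1]; have : Feval c (xs k) y != 0.
    by rewrite (ell k).2 !mulf_neq0 // subr_eq0.
  by rewrite Fxy !mulf_eq0 !negb_or !subr_eq0 => /andP[/andP[_ ->] ->].
rewrite -(DM_P Y2y _ _ pm); first last.
- by move=> k /xs_pm [kp km]; rewrite !(eq_sym _ (xs k)).
- by rewrite Fxy subrr mulr0.
- by rewrite Fxy subrr mulr0 mul0r.
rewrite (Dop_Mop_cauchy_sum (r := int_range j1 j2) (w := w) (a := xs)); first last.
- by move=> k; rewrite mem_int_range // => /xs_pm.
- exact: pm.
- by move=> x; rewrite isum_int_range.
apply: eq_big_seq => k; rewrite mem_int_range // => /xs_pm [kp km].
have Y1y : Y1p.[y] = - (Y2 c y * (p + m)) by rewrite pmE; field.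
rewrite pf_den_Feval Fxy /pf_num !(hornerM, hornerD, hornerN, hornerC) -Y2_Ypoly Y1y.
by field; rewrite Y2y !subr_eq0 kp km.
Qed.

Lemma residues_at_ys_cancel j : j1 <= j <= j2 - 1 ->
  w j * X2 c (xs (j + 1)) * (ys j - ys (j + 1))
    * (2 * A.[ys j] + C.[ys j] * (xs (j + 1) - xs j))
  + w (j + 1) * X2 c (xs j) * (ys j - ys (j - 1))
    * (2 * A.[ys j] - C.[ys j] * (xs (j + 1) - xs j)) = 0.
Proof.
move=> /andP[j1j jj2].
have js : j \in int_range j1 j2 by rewrite mem_int_range //; lia.
pose rest := [seq k <- int_range j1 j2 | k != j].
have j1s : j + 1 \in rest.
  by rewrite mem_filter mem_int_range //; apply/andP; split; lia.
pose Wl := (2 * X2 c (xs j))%:P * ('X - (ys (j - 1))%:P).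
pose Wr := (2 * X2 c (xs (j + 1)))%:P * ('X - (ys (j + 1))%:P).
pose N := pf_num w A C j * Wr + pf_num w A C (j + 1) * Wl.
pose V := \prod_(k <- rest | k != j + 1) pf_den k.
have [U UE] := horner_sum_frac rest (fun k => k != j + 1) (pf_num w A C) pf_den.
have Na : N.[ys j] = 0.
  apply: (@residue_eq0 _ (ys j) P N (Wl * Wr) U V _ excluded_poly_neq0).
  - rewrite /Wl /Wr !(hornerM, hornerC, hornerXsubC) !mulf_neq0 ?X2_neq0 ?pnatr_eq0 //;
    by rewrite subr_eq0 (inj_eq ys_inj); apply/eqP; lia.
  - rewrite horner_prod prodf_seq_neq0; apply/allP => k.
    rewrite mem_filter mem_int_range //= => /andP[kj _]; apply/implyP => kj1.
    rewrite horner_pf_den !mulf_neq0 ?X2_neq0 ?pnatr_eq0 //;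
    by rewrite subr_eq0 (inj_eq ys_inj); apply/eqP; lia.
  move=> y Qy ya; rewrite /Wl /Wr !(hornerM, hornerC, hornerXsubC) !mulf_eq0 !negb_or.
  move=> /andP[/andP[_ yl] /andP[_ yr]] Vy.
  rewrite (P_partial_fractions Qy) (bigD1_seq j) ?int_range_uniq //.
  rewrite -big_filter (bigD1_seq (j + 1)) ?filter_uniq ?int_range_uniq //= UE //.
  rewrite -/V /N !horner_pf_den addrK !(hornerM, hornerD, hornerN, hornerC, hornerX).
  by field; rewrite yl yr Vy !X2_neq0 subr_eq0 ya.
have two_Y2 : 2 * Y2 c (ys j) != 0 by rewrite mulf_neq0 ?pnatr_eq0 ?Y2_neq0.
apply: (mulIf two_Y2); rewrite mul0r -Na.
rewrite /N /pf_num /Wl /Wr !(hornerM, hornerD, hornerN, hornerC, hornerXsubC).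
by rewrite hornerX -Y2_Ypoly Y1_ys; ring.
Qed.

Lemma residue_balance j : j1 <= j <= j2 - 1 ->
  w (j + 1) / ((ys (j + 1) - ys j) * X2 c (xs (j + 1)))
    * (A.[ys j] / (xs (j + 1) - xs j) - C.[ys j] / 2)
  = w j / ((ys j - ys (j - 1)) * X2 c (xs j))
    * (A.[ys j] / (xs (j + 1) - xs j) + C.[ys j] / 2).
Proof.
move=> jr; have cancel_j := residues_at_ys_cancel jr; case/andP: jr => j1j jj2.
have d0 : xs (j + 1) - xs j != 0.
  by rewrite subr_eq0 (inj_eq xs_inj); apply/eqP; lia.
have [yl0 yr0] : ys j - ys (j - 1) != 0 /\ ys (j + 1) - ys j != 0.
  by rewrite !subr_eq0 !(inj_eq ys_inj); split; apply/eqP; lia.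
apply/eqP; rewrite -subr_eq0; apply/eqP.
rewrite -[RHS](mul0r ((2 * (xs (j + 1) - xs j) * (ys (j + 1) - ys j)
  * (ys j - ys (j - 1)) * X2 c (xs j) * X2 c (xs (j + 1)))^-1)) -cancel_j.
by field; rewrite d0 yl0 yr0 !X2_neq0.
Qed.

End EllipticResidues.

Theorem mainTheorem13 (R : realType) (c : 'I_3 -> 'I_3 -> R[i])
  (xs ys : int -> R[i]) (j1 j2 : int) (w : int -> R[i]) (A C : {poly R[i]}) :
  elliptic_seq c xs ys ->
  general_position c xs ys ->
  j1 < j2 ->
  let f := fun x : R[i] => isum j1 j2 (fun j => w j / (xs j - x)) in
  (exists P : {poly R[i]},
     forall y xp xm : R[i],
       Y2 c y != 0 -> Feval c xp y = 0 -> Feval c xm y = 0 -> xp != xm ->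
       (forall j : int, j1 <= j <= j2 -> xp != xs j /\ xm != xs j) ->
       A.[y] * Dop f xp xm - C.[y] * Mop f xp xm = P.[y]) ->
  forall j : int, j1 <= j <= j2 - 1 ->
    w (j + 1) / ((ys (j + 1) - ys j) * X2 c (xs (j + 1)))
      * (A.[ys j] / (xs (j + 1) - xs j) - C.[ys j] / 2)
    = w j / ((ys j - ys (j - 1)) * X2 c (xs j))
      * (A.[ys j] / (xs (j + 1) - xs j) + C.[ys j] / 2).
Proof.
move=> ell [xs_inj [ys_inj [X2_neq0 Y2_neq0]]] j12 f [P DM_P].
exact: (residue_balance ell xs_inj ys_inj X2_neq0 Y2_neq0 (ltW j12) DM_P).
Qed.
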